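(* Let $G$, $P$, $w$ be as in the context, with all edge costs positive integer multiples of $\delta>0$, where $\delta$ is the largest number dividing all edge costs. Let $s\neq t$ with at least one directed path from $s$ to $t$, let $d_s$ be the number of out-neighbours of $s$, and let $0<\alpha<1$ be such that $\epsilon_{st}(\alpha)=U_s^{\{t,\overline o\}}(\alpha)-L_{st}<\delta/d_s$. Then any out-neighbour $j$ of $s$ maximizing $\check P_{sj}(\alpha)$ over all out-neighbours of $s$ satisfies that the edge $e_{sj}$ lies on a shortest (minimum-cost) path from $s$ to $t$.
   Context: $G=(V,E)$ is a finite directed graph; each edge $e_{ij}\in E$ has a positive cost $w_{ij}$; $P$ is a row-stochastic transition matrix with $P_{ij}>0$ iff $e_{ij}\in E$. $L_{st}$ is the minimum total cost of a directed path from $s$ to $t$. Evaporating network $G_\alpha$: Markov chain on $V\cup\{o\}$ with $P_{ij}(\alpha)=P_{ij}\alpha^{w_{ij}}$ ($i,j\in V$), $P_{io}(\alpha)=1-\sum_jP_{ij}\alpha^{w_{ij}}$, $o$ absorbing. With $t,o$ absorbing and $\mathcal T=V\setminus\{t\}$: $Q_x=Q_x^{\{t,\overline o\}}(\alpha)$ is the probability the chain from $x$ is absorbed at $t$ ($Q_t=1$); $F(\alpha)=(I-P(\alpha)_{\mathcal T\mathcal T})^{-1}$; $F^{\{t,\overline o\}}_{sm}(\alpha)=F_{sm}(\alpha)Q_m/Q_s$; the avoidance hitting cost is $U_s^{\{t,\overline o\}}(\alpha)=\sum_{m\in\mathcal T}F^{\{t,\overline o\}}_{sm}(\alpha)r_m$,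 $r_m=\sum_iP_{mi}(\alpha)w_{mi}Q_i/Q_m$ (the expected walk cost from $s$ conditioned on absorption at $t$). Transformed edge probabilities: $\check P_{ij}(\alpha)=P_{ij}(\alpha)\,Q_j/Q_i$. *)

From Stdlib Require Import Reals Lra List Arith ClassicalEpsilon.
Import ListNotations.
Open Scope R_scope.

(* Vertices are the naturals 0 .. n-1. Matrices are functions nat -> nat -> R
   (only entries with indices < n are meaningful). *)

Definition rsum (n : nat) (f : nat -> R) : R :=
  fold_right Rplus 0 (map f (seq 0 n)).

Definition edge (n : nat) (P : nat -> nat -> R) (i j : nat) : Prop :=
  (i < n)%nat /\ (j < n)%nat /\ 0 < P i j.

Fixpoint chain (n : nat) (P : nat -> nat -> R) (x : nat) (l : list nat) : Prop :=
  match l with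
  | [] => True
  | y :: l' => edge n P x y /\ chain n P y l'
  end.

Definition is_walk (n : nat) (P : nat -> nat -> R) (s t : nat) (p : list nat) : Prop :=
  exists rest, p = s :: rest /\ chain n P s rest /\ last p s = t /\ (s < n)%nat.

Fixpoint chain_cost (w : nat -> nat -> R) (x : nat) (l : list nat) : R :=
  match l with
  | [] => 0
  | y :: l' => w x y + chain_cost w y l'
  end.

Definition walk_cost (w : nat -> nat -> R) (p : list nat) : R :=
  match p with [] => 0 | x :: l => chain_cost w x l end.

Fixpoint uses_edge (i j : nat) (p : list nat) : Prop :=
  match p with
  | x :: ((y :: _) as l') => (x = i /\ y = j) \/ uses_edge i j l'
  | _ => False
  end.

Definition is_min_cost (n : nat) (P w : nat -> nat -> R) (s t : nat) (L : R) : Prop :=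
  (exists p, is_walk n P s t p /\ walk_cost w p = L) /\
  (forall p, is_walk n P s t p -> L <= walk_cost w p).

Definition Lst (n : nat) (P w : nat -> nat -> R) (s t : nat) : R :=
  epsilon (inhabits 0) (is_min_cost n P w s t).

Definition kron (i j : nat) : R := if Nat.eq_dec i j then 1 else 0.

Definition is_inverse (n : nat) (A B : nat -> nat -> R) : Prop :=
  forall i j, (i < n)%nat -> (j < n)%nat ->
    rsum n (fun k => A i k * B k j) = kron i j /\
    rsum n (fun k => B i k * A k j) = kron i j.

Definition mat_inv (n : nat) (A : nat -> nat -> R) : nat -> nat -> R :=
  epsilon (inhabits (fun _ _ => 0)) (is_inverse n A).

Definition Palpha (P w : nat -> nat -> R) (alpha : R) (i j : nat) : R :=
  P i j * Rpower alpha (w i j).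

(* P(alpha)_{TT} with T = V \ {t}, padded by zeros in row/column t *)
Definition PTT (P w : nat -> nat -> R) (alpha : R) (t : nat) (i j : nat) : R :=
  if Nat.eq_dec i t then 0 else if Nat.eq_dec j t then 0 else Palpha P w alpha i j.

(* F(alpha) = (I - P(alpha)_{TT})^{-1}; the padded matrix is block diagonal,
   its T-block inverse is F(alpha). *)
Definition Fmat (n : nat) (P w : nat -> nat -> R) (alpha : R) (t : nat) : nat -> nat -> R :=
  mat_inv n (fun i j => kron i j - PTT P w alpha t i j).

Definition rsumT (n t : nat) (f : nat -> R) : R :=
  rsum n (fun m => if Nat.eq_dec m t then 0 else f m).

(* absorption probability at t (t, o absorbing): Q_t = 1,
   Q_x = sum_{m in T} F_xm P_mt(alpha) for x in T *)
Definition Qabs (n : nat) (P w : nat -> nat -> R) (alpha : R) (t x : nat) : R :=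
  if Nat.eq_dec x t then 1
  else rsumT n t (fun m => Fmat n P w alpha t x m * Palpha P w alpha m t).

Definition rcost (n : nat) (P w : nat -> nat -> R) (alpha : R) (t m : nat) : R :=
  rsum n (fun i => Palpha P w alpha m i * w m i * Qabs n P w alpha t i)
    / Qabs n P w alpha t m.

Definition Uavoid (n : nat) (P w : nat -> nat -> R) (alpha : R) (s t : nat) : R :=
  rsumT n t (fun m => Fmat n P w alpha t s m * Qabs n P w alpha t m
                       / Qabs n P w alpha t s * rcost n P w alpha t m).

Definition Pcheck (n : nat) (P w : nat -> nat -> R) (alpha : R) (t i j : nat) : R :=
  Palpha P w alpha i j * Qabs n P w alpha t j / Qabs n P w alpha t i.

Definition outdeg (n : nat) (P : nat -> nat -> R) (s : nat) : nat :=
  length (filter (fun j => if Rlt_dec 0 (P s j) then true else false) (seq 0 n)).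

From Stdlib Require Import Reals List Lra Lia ClassicalEpsilon Classical Wf_nat.
From mathcomp Require ssreflect ssrfun ssrbool eqtype ssrnat seq fintype bigop ssralg matrix.
From mathcomp Require Rstruct.
Import ListNotations.
Open Scope R_scope.

(* Let Q be the absorption probabilities at t, Y = Q U the unnormalised conditioned cost
   and phi the distance to t.  With A the substochastic restriction of P(alpha) to V \ {t},
   Y solves Y = flux + A Y, and since phi satisfies the triangle inequality along edges,
   D = Y - phi Q solves D = h + A D with h_x = sum_i P_xi(alpha) Q_i (w_xi + phi_i - phi_x)
   >= 0.  The minimum principle for A gives D >= 0, hence
   U_s - L_st = D_s / Q_s >= check P_sj (w_sj + phi_j - phi_s).  If e_sj lies on no
   shortest path, the reduced cost w_sj + phi_j - phi_s is a positive multiple of delta.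
   Finally the check P_s. sum to 1 over the d_s out-neighbours, so the maximal one is at
   least 1 / d_s, giving eps_st >= delta / d_s. *)

Lemma rsum_S m f : rsum (S m) f = rsum m f + f m.
Proof.
  unfold rsum. rewrite seq_S, map_app, fold_right_app. simpl.
  generalize (map f (seq 0 m)). intro l. replace (f m + 0) with (f m) by ring.
  induction l as [|a l IH]; simpl; [ring|rewrite IH; ring].
Qed.

Lemma rsum_ext m f g : (forall i, (i < m)%nat -> f i = g i) -> rsum m f = rsum m g.
Proof.
  induction m; intros H; [reflexivity|].
  rewrite !rsum_S, IHm by (intros; apply H; lia). rewrite H by lia. reflexivity.
Qed.

Lemma rsum_zero m : rsum m (fun _ => 0) = 0.
Proof. induction m; [reflexivity|rewrite rsum_S, IHm; ring]. Qed.

Lemma rsum_plus m f g : rsum m (fun i => f i + g i) = rsum m f + rsum m g.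
Proof. induction m; [unfold rsum; simpl; ring|rewrite !rsum_S, IHm; ring]. Qed.

Lemma rsum_minus m f g : rsum m (fun i => f i - g i) = rsum m f - rsum m g.
Proof. induction m; [unfold rsum; simpl; ring|rewrite !rsum_S, IHm; ring]. Qed.

Lemma rsum_scal m c f : rsum m (fun i => c * f i) = c * rsum m f.
Proof. induction m; [unfold rsum; simpl; ring|rewrite !rsum_S, IHm; ring]. Qed.

Lemma rsum_scalr m c f : rsum m (fun i => f i * c) = rsum m f * c.
Proof. induction m; [unfold rsum; simpl; ring|rewrite !rsum_S, IHm; ring]. Qed.

Lemma rsum_swap a b (f : nat -> nat -> R) :
  rsum a (fun i => rsum b (fun j => f i j)) = rsum b (fun j => rsum a (fun i => f i j)).
Proof.
  induction a.
  - symmetry. apply rsum_zero.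
  - rewrite rsum_S, IHa, <- rsum_plus. apply rsum_ext. intros. rewrite rsum_S. reflexivity.
Qed.

Lemma rsum_le m f g : (forall i, (i < m)%nat -> f i <= g i) -> rsum m f <= rsum m g.
Proof.
  induction m; intros H; [unfold rsum; simpl; lra|].
  rewrite !rsum_S. assert (rsum m f <= rsum m g) by (apply IHm; intros; apply H; lia).
  specialize (H m ltac:(lia)). lra.
Qed.

Lemma rsum_nonneg m f : (forall i, (i < m)%nat -> 0 <= f i) -> 0 <= rsum m f.
Proof. intros H. rewrite <- (rsum_zero m). apply rsum_le; auto. Qed.

Lemma rsum_term_le m f k :
  (forall i, (i < m)%nat -> 0 <= f i) -> (k < m)%nat -> f k <= rsum m f.
Proof.
  induction m; intros H Hk; [lia|].
  rewrite rsum_S. destruct (Nat.eq_dec k m) as [->|Hne].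
  - assert (0 <= rsum m f) by (apply rsum_nonneg; intros; apply H; lia). lra.
  - assert (f k <= rsum m f) by (apply IHm; [intros; apply H; lia|lia]).
    specialize (H m ltac:(lia)). lra.
Qed.

Lemma rsum_nonneg_eq0 m f k :
  (forall i, (i < m)%nat -> 0 <= f i) -> rsum m f = 0 -> (k < m)%nat -> f k = 0.
Proof.
  intros H H0 Hk. pose proof (rsum_term_le m f k H Hk). pose proof (H k Hk). lra.
Qed.

Lemma rsum_neq0 m f : rsum m f <> 0 -> exists k, (k < m)%nat /\ f k <> 0.
Proof.
  induction m; intros H; [contradiction|].
  rewrite rsum_S in H. destruct (Req_dec (f m) 0) as [Hm|Hm].
  - destruct IHm as [k [Hk Hf]]; [lra|]. exists k. split; [lia|auto].
  - exists m. split; [lia|auto].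
Qed.

Lemma rsum_lt m f g : (forall i, (i < m)%nat -> f i <= g i) ->
  (exists k, (k < m)%nat /\ f k < g k) -> rsum m f < rsum m g.
Proof.
  intros H [k [Hk Hlt]].
  assert (g k - f k <= rsum m (fun i => g i - f i)).
  { apply (rsum_term_le m (fun i => g i - f i)); auto. intros i Hi; specialize (H i Hi); lra. }
  rewrite rsum_minus in H0. lra.
Qed.

Lemma rsum_single m k g : (k < m)%nat ->
  rsum m (fun i => if Nat.eq_dec i k then g i else 0) = g k.
Proof.
  induction m; intros Hk; [lia|].
  rewrite rsum_S. destruct (Nat.eq_dec m k) as [->|Hne].
  - rewrite (rsum_ext _ _ (fun _ => 0)), rsum_zero; [ring|].
    intros i Hi. destruct (Nat.eq_dec i k); [lia|reflexivity].
  - rewrite IHm by lia. ring.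
Qed.

Lemma rsum_kron m k f : (k < m)%nat -> rsum m (fun i => kron k i * f i) = f k.
Proof.
  intros Hk. rewrite <- (rsum_single m k f Hk). apply rsum_ext. intros i _.
  unfold kron. destruct (Nat.eq_dec k i), (Nat.eq_dec i k); subst; try lia; ring.
Qed.

Lemma rsum_le_outdeg n (P : nat -> nat -> R) s f c :
  (forall i, (i < n)%nat -> 0 < P s i -> f i <= c) ->
  (forall i, (i < n)%nat -> ~ 0 < P s i -> f i <= 0) ->
  rsum n f <= INR (outdeg n P s) * c.
Proof.
  unfold outdeg. induction n; intros Hin Hout.
  - unfold rsum. simpl. lra.
  - rewrite rsum_S, seq_S, filter_app, length_app, plus_INR.
    assert (rsum n f <= INR (length (filter (fun j => if Rlt_dec 0 (P s j) then true else false)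
                                       (seq 0 n))) * c)
      by (apply IHn; intros; [apply Hin|apply Hout]; auto; lia).
    simpl. destruct (Rlt_dec 0 (P s n)) as [Hp|Hp].
    + specialize (Hin n ltac:(lia) Hp). simpl. lra.
    + specialize (Hout n ltac:(lia) Hp). simpl. lra.
Qed.

Lemma argmin_exists m (D : nat -> R) : (0 < m)%nat ->
  exists x, (x < m)%nat /\ forall y, (y < m)%nat -> D x <= D y.
Proof.
  induction m as [|k IH]; intros Hm; [lia|].
  destruct k as [|k].
  - exists 0%nat. split; [lia|]. intros y Hy. replace y with 0%nat by lia. lra.
  - destruct IH as [x [Hx Hmin]]; [lia|].
    destruct (Rle_dec (D x) (D (S k))).
    + exists x. split; [lia|]. intros y Hy.
      destruct (Nat.eq_dec y (S k)); [subst; auto|apply Hmin; lia].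
    + exists (S k). split; [lia|]. intros y Hy.
      destruct (Nat.eq_dec y (S k)); [subst; lra|]. specialize (Hmin y ltac:(lia)). lra.
Qed.

Section Substochastic.

Variables (n : nat) (A : nat -> nat -> R).
Hypothesis A_nonneg : forall x i, (x < n)%nat -> (i < n)%nat -> 0 <= A x i.
Hypothesis A_row_lt1 : forall x, (x < n)%nat -> rsum n (A x) < 1.

(* At a minimiser m of D, the inequality D m >= sum_i A m i D i >= (sum_i A m i) D m
   forces D m >= 0 because the row sum is < 1. *)
Lemma superharmonic_nonneg (D : nat -> R) :
  (forall x, (x < n)%nat -> rsum n (fun i => A x i * D i) <= D x) ->
  forall x, (x < n)%nat -> 0 <= D x.
Proof.
  intros HD x Hx.
  destruct (argmin_exists n D ltac:(lia)) as [m [Hm Hmin]].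
  enough (0 <= D m) by (specialize (Hmin x Hx); lra).
  assert (rsum n (A m) * D m <= D m).
  { rewrite <- rsum_scalr. eapply Rle_trans; [|apply (HD m Hm)].
    apply rsum_le. intros i Hi. apply Rmult_le_compat_l; auto. }
  specialize (A_row_lt1 m Hm). nra.
Qed.

Lemma id_minus_injective (v : nat -> R) :
  (forall i, (i < n)%nat -> rsum n (fun j => (kron i j - A i j) * v j) = 0) ->
  forall i, (i < n)%nat -> v i = 0.
Proof.
  intros Hv.
  assert (Hfix : forall i, (i < n)%nat -> rsum n (fun j => A i j * v j) = v i).
  { intros i Hi. specialize (Hv i Hi).
    rewrite (rsum_ext _ _ (fun j => kron i j * v j - A i j * v j)) in Hv by (intros; ring).
    rewrite rsum_minus, rsum_kron in Hv by auto. lra. }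
  assert (Hpos : forall i, (i < n)%nat -> 0 <= v i).
  { apply superharmonic_nonneg. intros x Hx. rewrite Hfix; auto; lra. }
  assert (Hneg : forall i, (i < n)%nat -> 0 <= - v i).
  { apply superharmonic_nonneg. intros x Hx.
    rewrite (rsum_ext _ _ (fun j => -1 * (A x j * v j))) by (intros; ring).
    rewrite rsum_scal, Hfix; auto; lra. }
  intros i Hi. specialize (Hpos i Hi). specialize (Hneg i Hi). lra.
Qed.

End Substochastic.

Section MatrixInverse.

Import ssreflect ssrfun ssrbool eqtype ssrnat seq fintype bigop ssralg matrix Rstruct.
Import GRing.Theory.
Local Open Scope ring_scope.

Lemma rsum_big m (f : nat -> R) : rsum m f = \sum_(k < m) f k.
Proof.
have seq_iota a : List.seq a m = iota a m by elim: m a => //= m IH a; rewrite IH.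
rewrite /rsum seq_iota -(big_mkord xpredT f) /index_iota subn0.
by elim: (iota 0 m) => [|a l IH] /=; rewrite ?big_nil ?big_cons ?IH.
Qed.

(* A trivial kernel gives a nonzero determinant (det0P on the transpose), so invmx is an
   inverse. *)
Lemma is_inverse_exists n (M : nat -> nat -> R) :
  (forall v, (forall i, (i < n)%coq_nat -> rsum n (fun j => M i j * v j) = 0) ->
     forall i, (i < n)%coq_nat -> v i = 0) ->
  exists B, is_inverse n M B.
Proof.
case: n => [|n] Hinj.
  by exists (fun _ _ => 0) => i j /ltP.
pose Mm : 'M[R]_n.+1 := \matrix_(i, j) M i j.
have Mm_unit : Mm \in unitmx.
  rewrite unitmxE unitfE -det_tr; apply/negP => /det0P [v /negP v_neq0 v_ker].
  apply: v_neq0; apply/eqP/matrixP => a b; rewrite (ord1 a) mxE.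
  pose vf k := if (k < n.+1)%N then v ord0 (inord k) else 0.
  have vf0 : forall i, (i < n.+1)%coq_nat -> vf i = 0.
    apply: Hinj => i /ltP Hi; rewrite rsum_big.
    have := congr1 (fun B : 'M[R]_(1, n.+1) => B ord0 (inord i)) v_ker.
    rewrite !mxE => vi0; apply: etrans vi0; apply: eq_bigr => k _.
    by rewrite /vf ltn_ord inord_val !mxE inordK // mulrC.
  by have := vf0 b (ltP (ltn_ord b)); rewrite /vf ltn_ord inord_val.
exists (fun i j => invmx Mm (inord i) (inord j)) => i j /ltP Hi /ltP Hj.
have -> : kron i j = (1%:M : 'M[R]_n.+1) (inord i) (inord j).
  rewrite mxE /kron; case: Nat.eq_dec => [<-|ij]; first by rewrite eqxx.
  by case: eqP => // /(congr1 val); rewrite /= !inordK.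
rewrite -{1}(mulmxV Mm_unit) -(mulVmx Mm_unit) !mxE !rsum_big.
by split; apply: eq_bigr => k _; rewrite !mxE !inordK // inord_val.
Qed.

End MatrixInverse.

Lemma inverse_fixpoint n (A F : nat -> nat -> R) (c : nat -> R) x :
  is_inverse n (fun i j => kron i j - A i j) F -> (x < n)%nat ->
  rsum n (fun m => F x m * c m)
  = c x + rsum n (fun k => A x k * rsum n (fun m => F k m * c m)).
Proof.
  intros HF Hx.
  set (Y := fun k => rsum n (fun m => F k m * c m)).
  assert (E : rsum n (fun k => (kron x k - A x k) * Y k) = c x).
  { unfold Y.
    rewrite (rsum_ext _ _ (fun k => rsum n (fun m => (kron x k - A x k) * F k m * c m))).
    2:{ intros k Hk. rewrite <- rsum_scal. apply rsum_ext. intros; ring. }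
    rewrite rsum_swap, (rsum_ext _ _ (fun m => kron x m * c m)).
    - apply rsum_kron; auto.
    - intros m Hm. rewrite rsum_scalr. f_equal. apply (HF x m Hx Hm). }
  rewrite (rsum_ext _ _ (fun k => kron x k * Y k - A x k * Y k)) in E by (intros; ring).
  rewrite rsum_minus, rsum_kron in E by auto. unfold Y in E. lra.
Qed.

Definition reaches n (P : nat -> nat -> R) x t : Prop := exists p, is_walk n P x t p.

Lemma last_cons_default (l : list nat) a d d' : last (a :: l) d = last (a :: l) d'.
Proof. revert a. induction l as [|b l IH]; intros a; [reflexivity|]. apply IH. Qed.

Lemma walk_cons n P w x i t p : edge n P x i -> is_walk n P i t p ->
  is_walk n P x t (x :: p) /\ walk_cost w (x :: p) = w x i + walk_cost w p /\
  uses_edge x i (x :: p).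
Proof.
  intros He [r [-> [Hc [Hl Hi]]]]. pose proof He as [Hx _].
  split; [|split; [reflexivity|left; auto]].
  exists (i :: r). split; [reflexivity|]. split; [split; auto|]. split; [|auto].
  change (last (i :: r) x = t). rewrite (last_cons_default r i x i). exact Hl.
Qed.

Section CostLattice.

Variables (n : nat) (P w : nat -> nat -> R) (delta : R) (t : nat).
Hypothesis delta_pos : 0 < delta.
Hypothesis cost_mult : forall i j, edge n P i j -> exists k : nat, w i j = INR k * delta.

Lemma cost_nonneg i j : edge n P i j -> 0 <= w i j.
Proof.
  intros He. destruct (cost_mult i j He) as [k ->].
  apply Rmult_le_pos; [apply pos_INR|lra].
Qed.

Lemma walk_cost_mult x p : is_walk n P x t p -> exists K : nat, walk_cost w p = INR K * delta.
Proof.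
  intros [r [-> [Hc _]]]. simpl. revert x Hc. induction r as [|y r IH]; intros x Hc.
  - exists 0%nat. simpl. ring.
  - destruct Hc as [He Hc]. destruct (cost_mult _ _ He) as [k Hk]. destruct (IH y Hc) as [K HK].
    exists (k + K)%nat. simpl. rewrite Hk, HK, plus_INR. ring.
Qed.

(* The walk costs lie in the well-ordered set delta * N, so the minimum is attained. *)
Lemma Lst_spec x : reaches n P x t -> is_min_cost n P w x t (Lst n P w x t).
Proof.
  intros [p0 Hp0]. unfold Lst. apply epsilon_spec.
  set (S := fun K : nat => exists p, is_walk n P x t p /\ walk_cost w p = INR K * delta).
  destruct (dec_inh_nat_subset_has_unique_least_element S) as [K0 [[HK0 Hmin] _]].
  - intros K. apply classic.
  - destruct (walk_cost_mult x p0 Hp0) as [K HK]. exists K, p0. auto.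
  - exists (INR K0 * delta). split.
    + destruct HK0 as [p [Hp Hc]]. exists p. auto.
    + intros p Hp. destruct (walk_cost_mult x p Hp) as [K HK].
      assert (K0 <= K)%nat by (apply Hmin; exists p; auto).
      rewrite HK. apply Rmult_le_compat_r; [lra|]. apply le_INR; auto.
Qed.

Lemma Lst_gap x p : is_walk n P x t p -> walk_cost w p <> Lst n P w x t ->
  Lst n P w x t + delta <= walk_cost w p.
Proof.
  intros Hp Hne.
  destruct (Lst_spec x (ex_intro _ p Hp)) as [[q [Hq Hq_cost]] Hmin].
  specialize (Hmin p Hp). rewrite <- Hq_cost in *.
  destruct (walk_cost_mult x p Hp) as [K HK], (walk_cost_mult x q Hq) as [K0 HK0].
  rewrite HK, HK0 in *.
  assert (Hle : (K0 <= K)%nat) by (apply INR_le, (Rmult_le_reg_r delta); auto).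
  assert (Hlt : (S K0 <= K)%nat).
  { destruct (Nat.eq_dec K0 K) as [<-|]; [contradiction|lia]. }
  apply le_INR in Hlt. rewrite S_INR in Hlt. nra.
Qed.

Lemma Lst_refl : (t < n)%nat -> Lst n P w t t = 0.
Proof.
  intros Ht.
  assert (Hnil : is_walk n P t t [t]) by (exists []; repeat split; auto).
  destruct (Lst_spec t (ex_intro _ _ Hnil)) as [[p [Hp Hp_cost]] Hmin].
  specialize (Hmin _ Hnil). simpl in Hmin. rewrite <- Hp_cost in *.
  destruct (walk_cost_mult t p Hp) as [K HK]. rewrite HK in *.
  assert (0 <= INR K * delta) by (apply Rmult_le_pos; [apply pos_INR|lra]). lra.
Qed.

Lemma Lst_upper_bound : exists M, forall x, (x < n)%nat -> Lst n P w x t + delta <= M.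
Proof.
  exists (rsum n (fun x => Rabs (Lst n P w x t)) + delta). intros x Hx.
  pose proof (Rle_abs (Lst n P w x t)).
  pose proof (rsum_term_le n (fun x => Rabs (Lst n P w x t)) x (fun i _ => Rabs_pos _) Hx).
  simpl in *. lra.
Qed.

Variable M : R.
Hypothesis M_large : forall x, (x < n)%nat -> Lst n P w x t + delta <= M.

(* The distance to t, extended by the large constant M where t is unreachable, so that
   it satisfies the triangle inequality along every edge. *)
Definition dist_pot x : R :=
  if excluded_middle_informative (reaches n P x t) then Lst n P w x t else M.

Lemma dist_pot_reaches x : reaches n P x t -> dist_pot x = Lst n P w x t.
Proof. intros Hx. unfold dist_pot. destruct (excluded_middle_informative _); tauto. Qed.

Lemma dist_pot_t : (t < n)%nat -> dist_pot t = 0.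
Proof.
  intros Ht. rewrite dist_pot_reaches; [apply Lst_refl; auto|].
  exists [t], []. repeat split; auto.
Qed.

Lemma dist_pot_edge x i : edge n P x i -> dist_pot x <= w x i + dist_pot i.
Proof.
  intros He. pose proof (cost_nonneg x i He). pose proof He as [Hx [Hi _]].
  unfold dist_pot at 2.
  destruct (excluded_middle_informative (reaches n P i t)) as [Hri|Hri].
  - destruct (Lst_spec i Hri) as [[p [Hp Hc]] _].
    destruct (walk_cons n P w x i t p He Hp) as [Hp' [Hc' _]].
    rewrite dist_pot_reaches by (eexists; eauto).
    destruct (Lst_spec x (ex_intro _ _ Hp')) as [_ Hmin].
    specialize (Hmin _ Hp'). lra.
  - unfold dist_pot. destruct (excluded_middle_informative _); [|lra].
    specialize (M_large x Hx). lra.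
Qed.

Lemma dist_pot_gap s j : edge n P s j -> reaches n P s t ->
  ~ (exists p, is_walk n P s t p /\ walk_cost w p = Lst n P w s t /\ uses_edge s j p) ->
  dist_pot s + delta <= w s j + dist_pot j.
Proof.
  intros He Hs Hno. pose proof (cost_nonneg s j He). pose proof He as [Hsn _].
  rewrite dist_pot_reaches by auto. unfold dist_pot.
  destruct (excluded_middle_informative (reaches n P j t)) as [Hrj|Hrj].
  - destruct (Lst_spec j Hrj) as [[p [Hp <-]] _].
    destruct (walk_cons n P w s j t p He Hp) as [Hp' [<- Hu]].
    apply Lst_gap; auto. intros Hc. apply Hno. eauto.
  - specialize (M_large s Hsn). lra.
Qed.

End CostLattice.

Section Evaporating.

Variables (n : nat) (P w : nat -> nat -> R) (alpha : R) (t : nat).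
Hypothesis P_nonneg : forall i j, (i < n)%nat -> (j < n)%nat -> 0 <= P i j.
Hypothesis P_row_sum : forall i, (i < n)%nat -> rsum n (P i) = 1.
Hypothesis cost_pos : forall i j, edge n P i j -> 0 < w i j.
Hypothesis alpha_range : 0 < alpha < 1.
Hypothesis t_lt : (t < n)%nat.

Local Notation Pa := (Palpha P w alpha).
Local Notation A := (PTT P w alpha t).
Local Notation F := (Fmat n P w alpha t).
Local Notation Q := (Qabs n P w alpha t).

Lemma zero_or_edge x i : (x < n)%nat -> (i < n)%nat -> P x i = 0 \/ edge n P x i.
Proof.
  intros Hx Hi. destruct (P_nonneg x i Hx Hi); [right; repeat split; auto|left; auto].
Qed.

Lemma Palpha_zero x i : P x i = 0 -> Pa x i = 0.
Proof. intros H. unfold Palpha. rewrite H. ring. Qed.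

Lemma Palpha_nonneg x i : (x < n)%nat -> (i < n)%nat -> 0 <= Pa x i.
Proof.
  intros Hx Hi. unfold Palpha, Rpower.
  apply Rmult_le_pos; [auto|left; apply exp_pos].
Qed.

Lemma Palpha_lt_edge x i : edge n P x i -> Pa x i < P x i.
Proof.
  intros He. pose proof He as [_ [_ HP]].
  assert (Rpower alpha (w x i) < 1).
  { unfold Rpower. rewrite <- exp_0. apply exp_increasing.
    assert (ln alpha < 0) by (rewrite <- ln_1; apply ln_increasing; lra).
    pose proof (cost_pos x i He). nra. }
  unfold Palpha. nra.
Qed.

Lemma Palpha_row_lt1 x : (x < n)%nat -> rsum n (Pa x) < 1.
Proof.
  intros Hx. rewrite <- (P_row_sum x Hx). apply rsum_lt.
  - intros i Hi. destruct (zero_or_edge x i Hx Hi) as [H|H].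
    + rewrite Palpha_zero, H by auto. lra.
    + left. apply Palpha_lt_edge; auto.
  - destruct (rsum_neq0 n (P x)) as [k [Hk Hnz]]; [rewrite P_row_sum; auto; lra|].
    exists k. split; auto.
    destruct (zero_or_edge x k Hx Hk) as [H|H]; [contradiction|apply Palpha_lt_edge; auto].
Qed.

Lemma PTT_row_t i : A t i = 0.
Proof. unfold PTT. destruct (Nat.eq_dec t t); tauto. Qed.

Lemma PTT_col_t x : A x t = 0.
Proof. unfold PTT. destruct (Nat.eq_dec x t); auto. destruct (Nat.eq_dec t t); tauto. Qed.

Lemma PTT_off_t x i : x <> t -> i <> t -> A x i = Pa x i.
Proof.
  intros Hx Hi. unfold PTT.
  destruct (Nat.eq_dec x t); [tauto|]. destruct (Nat.eq_dec i t); tauto.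
Qed.

Lemma PTT_nonneg x i : (x < n)%nat -> (i < n)%nat -> 0 <= A x i.
Proof.
  intros Hx Hi. destruct (Nat.eq_dec x t) as [->|]; [rewrite PTT_row_t; lra|].
  destruct (Nat.eq_dec i t) as [->|]; [rewrite PTT_col_t; lra|].
  rewrite PTT_off_t by auto. apply Palpha_nonneg; auto.
Qed.

Lemma PTT_row_lt1 x : (x < n)%nat -> rsum n (A x) < 1.
Proof.
  intros Hx. eapply Rle_lt_trans; [|apply (Palpha_row_lt1 x Hx)].
  apply rsum_le. intros i Hi.
  destruct (Nat.eq_dec x t) as [->|]; [rewrite PTT_row_t; apply Palpha_nonneg; auto|].
  destruct (Nat.eq_dec i t) as [->|]; [rewrite PTT_col_t; apply Palpha_nonneg; auto|].
  rewrite PTT_off_t by auto. lra.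
Qed.

Lemma rsum_Palpha_split x f : x <> t ->
  rsum n (fun k => Pa x k * f k) = rsum n (fun k => A x k * f k) + Pa x t * f t.
Proof.
  intros Hxt.
  rewrite <- (rsum_single n t (fun k => Pa x k * f k)), <- rsum_plus by auto.
  apply rsum_ext. intros k Hk. destruct (Nat.eq_dec k t) as [->|Hkt].
  - rewrite PTT_col_t. ring.
  - rewrite PTT_off_t by auto. ring.
Qed.

Lemma PTT_superharmonic_nonneg (D : nat -> R) :
  (forall x, (x < n)%nat -> x <> t -> rsum n (fun i => A x i * D i) <= D x) -> 0 <= D t ->
  forall x, (x < n)%nat -> 0 <= D x.
Proof.
  intros HD HDt. apply (superharmonic_nonneg n A PTT_nonneg PTT_row_lt1).
  intros x Hx. destruct (Nat.eq_dec x t) as [->|Hxt]; [|auto].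
  rewrite (rsum_ext _ _ (fun _ => 0)), rsum_zero by (intros; rewrite PTT_row_t; ring). auto.
Qed.

Lemma Fmat_inverse : is_inverse n (fun i j => kron i j - A i j) F.
Proof.
  unfold Fmat, mat_inv. apply epsilon_spec, is_inverse_exists.
  apply (id_minus_injective n A PTT_nonneg PTT_row_lt1).
Qed.

Lemma Fmat_fixpoint x c : (x < n)%nat ->
  rsumT n t (fun m => F x m * c m)
  = (if Nat.eq_dec x t then 0 else c x)
    + rsum n (fun k => A x k * rsumT n t (fun m => F k m * c m)).
Proof.
  intros Hx. set (c' := fun m => if Nat.eq_dec m t then 0 else c m).
  assert (Hc' : forall k, rsumT n t (fun m => F k m * c m) = rsum n (fun m => F k m * c' m)).
  { intros k. apply rsum_ext. intros m _. unfold c'. destruct (Nat.eq_dec m t); ring. }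
  rewrite Hc', (inverse_fixpoint n A F c' x Fmat_inverse Hx).
  f_equal. apply rsum_ext. intros k _. rewrite Hc'. reflexivity.
Qed.

Lemma Qabs_t : Q t = 1.
Proof. unfold Qabs. destruct (Nat.eq_dec t t); tauto. Qed.

Lemma Qabs_rec x : (x < n)%nat -> x <> t -> Q x = Pa x t + rsum n (fun k => A x k * Q k).
Proof.
  intros Hx Hxt. unfold Qabs at 1. destruct (Nat.eq_dec x t); [tauto|].
  rewrite Fmat_fixpoint by auto. destruct (Nat.eq_dec x t); [tauto|].
  f_equal. apply rsum_ext. intros k _. destruct (Nat.eq_dec k t) as [->|Hkt].
  - rewrite !PTT_col_t. ring.
  - unfold Qabs. destruct (Nat.eq_dec k t); [tauto|reflexivity].
Qed.

Lemma Qabs_harmonic x : (x < n)%nat -> x <> t -> Q x = rsum n (fun k => Pa x k * Q k).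
Proof.
  intros Hx Hxt. rewrite rsum_Palpha_split, Qabs_t, (Qabs_rec x) by auto. ring.
Qed.

Lemma Qabs_nonneg x : (x < n)%nat -> 0 <= Q x.
Proof.
  apply PTT_superharmonic_nonneg; [|rewrite Qabs_t; lra].
  intros y Hy Hyt. rewrite (Qabs_rec y) by auto. pose proof (Palpha_nonneg y t Hy t_lt). lra.
Qed.

Lemma Qabs_pos_of_walk x p : is_walk n P x t p -> 0 < Q x.
Proof.
  intros [r [-> [Hc [Hl Hx]]]]. revert x Hc Hl Hx. induction r as [|y r IH]; intros x Hc Hl Hx.
  - simpl in Hl. rewrite Hl, Qabs_t. lra.
  - destruct Hc as [He Hc]. pose proof He as [_ [Hy _]].
    assert (HQy : 0 < Q y).
    { apply IH; auto. rewrite (last_cons_default r y y x). exact Hl. }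
    destruct (Nat.eq_dec x t) as [->|Hxt]; [rewrite Qabs_t; lra|].
    rewrite Qabs_harmonic by auto.
    eapply Rlt_le_trans; [|apply (rsum_term_le n (fun k => Pa x k * Q k) y)]; auto.
    + apply Rmult_lt_0_compat; auto. unfold Palpha, Rpower.
      apply Rmult_lt_0_compat; [apply He|apply exp_pos].
    + intros i Hi. apply Rmult_le_pos; [apply Palpha_nonneg|apply Qabs_nonneg]; auto.
Qed.

Definition cost_flux m : R := rsum n (fun i => Pa m i * w m i * Q i).

Definition cost_to_go x : R := rsumT n t (fun m => F x m * cost_flux m).

Lemma cost_flux_eq0 m : (m < n)%nat -> m <> t -> Q m = 0 -> cost_flux m = 0.
Proof.
  intros Hm Hmt HQ0. rewrite Qabs_harmonic in HQ0 by auto.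
  unfold cost_flux. rewrite <- (rsum_zero n). apply rsum_ext. intros i Hi.
  replace (Pa m i * w m i * Q i) with (Pa m i * Q i * w m i) by ring.
  rewrite (rsum_nonneg_eq0 n (fun k => Pa m k * Q k) i); auto; [ring|].
  intros k Hk. apply Rmult_le_pos; [apply Palpha_nonneg|apply Qabs_nonneg]; auto.
Qed.

(* rcost m divides by Q m, which vanishes (with the junk value x / 0 = 0) when t is
   unreachable from m; the flux out of m vanishes then as well. *)
Lemma Uavoid_eq s : (s < n)%nat -> s <> t -> 0 < Q s ->
  Uavoid n P w alpha s t = cost_to_go s / Q s.
Proof.
  intros Hs Hst HQs. unfold Uavoid, cost_to_go, rsumT, Rdiv at 2. rewrite <- rsum_scalr.
  apply rsum_ext. intros m Hm. destruct (Nat.eq_dec m t) as [->|Hmt]; [ring|].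
  unfold rcost. fold (cost_flux m).
  destruct (Req_dec (Q m) 0) as [HQ0|HQ0].
  - rewrite cost_flux_eq0, HQ0 by auto. unfold Rdiv. ring.
  - field. lra.
Qed.

Lemma cost_to_go_t : cost_to_go t = 0.
Proof.
  unfold cost_to_go. rewrite Fmat_fixpoint by auto. destruct (Nat.eq_dec t t); [|tauto].
  rewrite (rsum_ext _ _ (fun _ => 0)), rsum_zero by (intros; rewrite PTT_row_t; ring). ring.
Qed.

Lemma cost_to_go_rec x : (x < n)%nat -> x <> t ->
  cost_to_go x = cost_flux x + rsum n (fun k => A x k * cost_to_go k).
Proof.
  intros Hx Hxt. unfold cost_to_go at 1. rewrite Fmat_fixpoint by auto.
  destruct (Nat.eq_dec x t); [tauto|reflexivity].
Qed.

Section Potential.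

Variable phi : nat -> R.
Hypothesis phi_t : phi t = 0.
Hypothesis phi_edge : forall x i, edge n P x i -> phi x <= w x i + phi i.

Lemma pot_excess_nonneg x i : (x < n)%nat -> (i < n)%nat ->
  0 <= Pa x i * Q i * (w x i + phi i - phi x).
Proof.
  intros Hx Hi. destruct (zero_or_edge x i Hx Hi) as [H|H].
  - rewrite Palpha_zero by auto. lra.
  - pose proof (phi_edge x i H).
    apply Rmult_le_pos; [apply Rmult_le_pos; [apply Palpha_nonneg|apply Qabs_nonneg]|]; auto; lra.
Qed.

Lemma cost_to_go_pot_rec x : (x < n)%nat -> x <> t ->
  cost_to_go x - phi x * Q x
  = rsum n (fun i => Pa x i * Q i * (w x i + phi i - phi x))
    + rsum n (fun k => A x k * (cost_to_go k - phi k * Q k)).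
Proof.
  intros Hx Hxt.
  rewrite (rsum_ext _ (fun i => Pa x i * Q i * (w x i + phi i - phi x))
             (fun i => Pa x i * w x i * Q i + Pa x i * (phi i * Q i) - phi x * (Pa x i * Q i)))
    by (intros; ring).
  rewrite rsum_minus, rsum_plus, rsum_scal, <- Qabs_harmonic, rsum_Palpha_split, phi_t by auto.
  rewrite (rsum_ext _ (fun k => A x k * (cost_to_go k - phi k * Q k))
             (fun k => A x k * cost_to_go k - A x k * (phi k * Q k))) by (intros; ring).
  rewrite rsum_minus, (cost_to_go_rec x) by auto. unfold cost_flux. ring.
Qed.

(* D = cost_to_go - phi Q is A-superharmonic off t and vanishes at t. *)
Lemma cost_to_go_ge_pot x : (x < n)%nat -> phi x * Q x <= cost_to_go x.
Proof.
  intros Hx. enough (0 <= cost_to_go x - phi x * Q x) by lra. revert x Hx.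
  apply PTT_superharmonic_nonneg; [|rewrite cost_to_go_t, phi_t; lra].
  intros x Hx Hxt. rewrite (cost_to_go_pot_rec x) by auto.
  enough (0 <= rsum n (fun i => Pa x i * Q i * (w x i + phi i - phi x))) by lra.
  apply rsum_nonneg. intros i Hi. apply pot_excess_nonneg; auto.
Qed.

Lemma cost_to_go_pot_gap x j : (x < n)%nat -> x <> t -> (j < n)%nat ->
  Pa x j * Q j * (w x j + phi j - phi x) <= cost_to_go x - phi x * Q x.
Proof.
  intros Hx Hxt Hj. rewrite (cost_to_go_pot_rec x) by auto.
  assert (0 <= rsum n (fun k => A x k * (cost_to_go k - phi k * Q k))).
  { apply rsum_nonneg. intros k Hk. apply Rmult_le_pos; [apply PTT_nonneg; auto|].
    pose proof (cost_to_go_ge_pot k Hk). lra. }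
  pose proof (rsum_term_le n (fun i => Pa x i * Q i * (w x i + phi i - phi x)) j
                (fun i Hi => pot_excess_nonneg x i Hx Hi) Hj).
  simpl in *. lra.
Qed.

Lemma Uavoid_pot_gap s j : (s < n)%nat -> s <> t -> (j < n)%nat -> 0 < Q s ->
  Pcheck n P w alpha t s j * (w s j + phi j - phi s) <= Uavoid n P w alpha s t - phi s.
Proof.
  intros Hs Hst Hj HQs. rewrite Uavoid_eq by auto. unfold Pcheck.
  pose proof (cost_to_go_pot_gap s j Hs Hst Hj).
  apply (Rmult_le_reg_r (Q s)); auto.
  replace ((cost_to_go s / Q s - phi s) * Q s) with (cost_to_go s - phi s * Q s)
    by (field; lra).
  replace (Pa s j * Q j / Q s * (w s j + phi j - phi s) * Q s)
    with (Pa s j * Q j * (w s j + phi j - phi s)) by (field; lra).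
  auto.
Qed.

End Potential.

Lemma Pcheck_nonneg s j : (s < n)%nat -> (j < n)%nat -> 0 < Q s ->
  0 <= Pcheck n P w alpha t s j.
Proof.
  intros Hs Hj HQs. unfold Pcheck, Rdiv.
  apply Rmult_le_pos; [apply Rmult_le_pos; [apply Palpha_nonneg|apply Qabs_nonneg]; auto|].
  left. apply Rinv_0_lt_compat. auto.
Qed.

Lemma Pcheck_row_sum s : (s < n)%nat -> s <> t -> 0 < Q s ->
  rsum n (Pcheck n P w alpha t s) = 1.
Proof.
  intros Hs Hst HQs. unfold Pcheck, Rdiv.
  rewrite rsum_scalr, <- Qabs_harmonic by auto. field. lra.
Qed.

Lemma Pcheck_max_ge s j : (s < n)%nat -> s <> t -> 0 < Q s ->
  (forall j', edge n P s j' -> Pcheck n P w alpha t s j' <= Pcheck n P w alpha t s j) ->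
  1 <= INR (outdeg n P s) * Pcheck n P w alpha t s j.
Proof.
  intros Hs Hst HQs Hmax. rewrite <- (Pcheck_row_sum s) by auto.
  apply rsum_le_outdeg.
  - intros i Hi HP. apply Hmax. repeat split; auto.
  - intros i Hi HP. unfold Pcheck. rewrite Palpha_zero by (pose proof (P_nonneg s i Hs Hi); lra).
    unfold Rdiv. lra.
Qed.

End Evaporating.

Theorem mainTheorem7
  (n : nat) (P w : nat -> nat -> R) (delta : R) (s t : nat) (alpha : R)
  (* P row-stochastic on V = {0..n-1}; edges are the pairs with P_ij > 0 *)
  (HPnn : forall i j, (i < n)%nat -> (j < n)%nat -> 0 <= P i j)
  (HProw : forall i, (i < n)%nat -> rsum n (P i) = 1)
  (* edge costs: positive integer multiples of delta > 0 *)
  (Hdelta : 0 < delta)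
  (Hw : forall i j, edge n P i j -> exists k : nat, (1 <= k)%nat /\ w i j = INR k * delta)
  (* delta is the largest number dividing all edge costs *)
  (Hdelta_max : forall d, 0 < d ->
     (forall i j, edge n P i j -> exists k : nat, w i j = INR k * d) -> d <= delta)
  (Hs : (s < n)%nat) (Ht : (t < n)%nat) (Hst : s <> t)
  (Hpath : exists p, is_walk n P s t p)
  (Halpha : 0 < alpha < 1)
  (Heps : Uavoid n P w alpha s t - Lst n P w s t < delta / INR (outdeg n P s)) :
  forall j, edge n P s j ->
    (forall j', edge n P s j' -> Pcheck n P w alpha t s j' <= Pcheck n P w alpha t s j) ->
    exists p, is_walk n P s t p /\ walk_cost w p = Lst n P w s t /\ uses_edge s j p.
Proof.
  intros j Hj Hmax. apply NNPP. intros Hno. pose proof Hj as [_ [Hjn _]].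
  assert (Hmult : forall x i, edge n P x i -> exists k : nat, w x i = INR k * delta).
  { intros x i He. destruct (Hw x i He) as [k [_ Hk]]. eauto. }
  assert (Hpos : forall x i, edge n P x i -> 0 < w x i).
  { intros x i He. destruct (Hw x i He) as [k [Hk ->]].
    apply Rmult_lt_0_compat; [apply lt_0_INR; lia|lra]. }
  assert (HQs : 0 < Qabs n P w alpha t s).
  { destruct Hpath as [p Hp]. eapply Qabs_pos_of_walk; eauto. }
  assert (Hgap : Pcheck n P w alpha t s j * delta <= Uavoid n P w alpha s t - Lst n P w s t).
  { destruct (Lst_upper_bound n P w delta t) as [M HM].
    rewrite <- (dist_pot_reaches n P w t M s Hpath).
    eapply Rle_trans; [|apply (Uavoid_pot_gap n P w alpha t HPnn HProw Hpos Halpha Ht);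
                        eauto using dist_pot_t, dist_pot_edge].
    apply Rmult_le_compat_l; [apply Pcheck_nonneg; auto|].
    pose proof (dist_pot_gap n P w delta t Hdelta Hmult M HM s j Hj Hpath Hno). lra. }
  pose proof (Pcheck_max_ge n P w alpha t HPnn HProw Hpos Halpha Ht s j Hs Hst HQs Hmax) as Hdeg.
  set (d := INR (outdeg n P s)) in *.
  assert (Hd : 0 < d).
  { destruct (pos_INR (outdeg n P s)) as [|Hd0]; [auto|].
    fold d in Hd0. rewrite <- Hd0 in Hdeg. lra. }
  apply (Rlt_not_le _ _ Heps), (Rle_trans _ (Pcheck n P w alpha t s j * delta)); [|exact Hgap].
  apply (Rmult_le_reg_l d); auto.
  replace (d * (delta / d)) with delta by (field; lra). nra.
Qed.
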